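(* Let $\theta(q,x):=\sum_{j=0}^{\infty}q^{j(j+1)/2}x^j$ and $w:=3/\sqrt{2}$. For all $(q,t)\in[0.6,0.75]\times[0,1]$, one has $\theta(q,-t+wi)\neq 0$. *)

From Stdlib Require Import Reals.
From Coquelicot Require Import Coquelicot.
Open Scope R_scope.

Definition theta_term (q : R) (x : C) (j : nat) : C :=
  Cmult (RtoC (q ^ (j * (j + 1) / 2)%nat)) (pow_n x j).

Definition theta (q : R) (x : C) : C :=
  (Series (fun j => Re (theta_term q x j)), Series (fun j => Im (theta_term q x j))).

Definition w : R := 3 / sqrt 2.

(* Put x = -t + w i. As w^2 = 9/2, x^j = u_j(t) + i w v_j(t) with u_j, v_j in Q[t], so
   Im theta(q, x) = w * sum_j q^(j(j+1)/2) v_j(t). The first ten terms of this sum add up to at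
   least 1/1000 on the whole box [0.6, 0.75] x [0, 1], which is certified by exact rational
   interval arithmetic on a bisection of the box. Since |x| <= 12/5 and q <= 3/4, the remaining
   terms are dominated by a geometric series of sum less than 1/1000 < w/1000, so
   Im theta(q, x) > 0. *)

From Stdlib Require Import Reals.
From Coquelicot Require Import Coquelicot.
From Stdlib Require Import QArith Qround Qreals Lra Lia List.
Import ListNotations.
Open Scope R_scope.

Definition Qpoly := list Q.

Fixpoint Qpoly_eval (p : Qpoly) (t : R) : R :=
  match p with [] => 0 | c :: p' => Q2R c + t * Qpoly_eval p' t end.

Fixpoint Qpoly_add (p r : Qpoly) : Qpoly :=
  match p, r with
  | [], _ => r
  | _, [] => p
  | a :: p', b :: r' => Qred (a + b) :: Qpoly_add p' r'
  end.

Definition Qpoly_scale (c : Q) (p : Qpoly) : Qpoly := map (fun a => Qred (c * a)) p.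

Lemma Q2R_Qred x : Q2R (Qred x) = Q2R x.
Proof. apply Qeq_eqR, Qred_correct. Qed.

Lemma Qpoly_eval_add p r t :
  Qpoly_eval (Qpoly_add p r) t = Qpoly_eval p t + Qpoly_eval r t.
Proof.
  revert r; induction p as [|a p IH]; intros [|b r]; cbn [Qpoly_add Qpoly_eval]; try ring.
  rewrite Q2R_Qred, Q2R_plus, IH; ring.
Qed.

Lemma Qpoly_eval_scale c p t : Qpoly_eval (Qpoly_scale c p) t = Q2R c * Qpoly_eval p t.
Proof.
  unfold Qpoly_scale; induction p as [|a p IH]; cbn [Qpoly_eval map]; [ring|].
  rewrite Q2R_Qred, Q2R_mult, IH; ring.
Qed.

Lemma Qpoly_eval_mulX p t : Qpoly_eval (0%Q :: p) t = t * Qpoly_eval p t.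
Proof. cbn [Qpoly_eval]; rewrite RMicromega.Q2R_0; ring. Qed.

Lemma w_sqr : w * w = 9 / 2.
Proof.
  unfold w. assert (H := sqrt_sqrt 2 ltac:(lra)).
  assert (sqrt 2 <> 0) by (intro E; rewrite E in H; lra).
  replace (3 / sqrt 2 * (3 / sqrt 2)) with (9 / (sqrt 2 * sqrt 2)) by (field; auto).
  now rewrite H.
Qed.

(* (u + i w v) (-t + w i) = (-t u - 9/2 v) + i w (u - t v), since w^2 = 9/2. *)
Fixpoint xpow_polys (j : nat) : Qpoly * Qpoly :=
  match j with
  | O => ([1%Q], [])
  | S j => let (u, v) := xpow_polys j in
      (Qpoly_add (Qpoly_scale (-1) (0%Q :: u)) (Qpoly_scale (-9#2) v),
       Qpoly_add u (Qpoly_scale (-1) (0%Q :: v)))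
  end.

Lemma pow_n_xpow_polys t j :
  pow_n (((- t)%R, w) : C) j =
  (Qpoly_eval (fst (xpow_polys j)) t, w * Qpoly_eval (snd (xpow_polys j)) t).
Proof.
  induction j as [|j IH]; cbn [pow_n xpow_polys].
  - cbn [fst snd Qpoly_eval]. rewrite RMicromega.Q2R_1.
    apply injective_projections; cbn; ring.
  - rewrite IH. destruct (xpow_polys j) as [u v]. cbn [fst snd].
    rewrite !Qpoly_eval_add, !Qpoly_eval_scale, !Qpoly_eval_mulX.
    replace (Q2R (-1)) with (-1) by (unfold Q2R; simpl; lra).
    replace (Q2R (-9#2)) with (- (w * w)) by (rewrite w_sqr; unfold Q2R; simpl; lra).
    apply injective_projections; cbn; ring.
Qed.

Definition Qmul_lo (a0 a1 l : Q) : Q := if Qle_bool 0 l then a0 * l else a1 * l.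

Lemma Qle_bool_0_sign (l : Q) : if Qle_bool 0 l then 0 <= Q2R l else Q2R l < 0.
Proof.
  rewrite <- RMicromega.Q2R_0. destruct (Qle_bool 0 l) eqn:E.
  - apply Qle_Rle, Qle_bool_iff, E.
  - apply Qlt_Rlt, Qnot_le_lt. rewrite <- Qle_bool_iff, E. discriminate.
Qed.

Lemma Qmul_lo_le (a0 a1 l : Q) (a y : R) :
  0 <= a -> Q2R a0 <= a <= Q2R a1 -> Q2R l <= y -> Q2R (Qmul_lo a0 a1 l) <= a * y.
Proof.
  intros. unfold Qmul_lo. assert (Hl := Qle_bool_0_sign l).
  destruct (Qle_bool 0 l); rewrite Q2R_mult; nra.
Qed.

Fixpoint Qpoly_lo (p : Qpoly) (t0 t1 : Q) : Q :=
  match p with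
  | [] => 0
  | c :: p' => Qred (c + Qmul_lo t0 t1 (Qpoly_lo p' t0 t1))
  end.

Lemma Qpoly_lo_le p t0 t1 t :
  0 <= t -> Q2R t0 <= t <= Q2R t1 -> Q2R (Qpoly_lo p t0 t1) <= Qpoly_eval p t.
Proof.
  intros Ht Ht01. induction p as [|c p IH]; cbn [Qpoly_lo Qpoly_eval].
  - rewrite RMicromega.Q2R_0; lra.
  - rewrite Q2R_Qred, Q2R_plus.
    assert (Hlo := Qmul_lo_le t0 t1 _ t (Qpoly_eval p t) Ht Ht01 IH).
    lra.
Qed.

Fixpoint Qpow (a : Q) (n : nat) : Q := match n with O => 1 | S n => a * Qpow a n end.

Lemma Q2R_Qpow a n : Q2R (Qpow a n) = Q2R a ^ n.
Proof.
  induction n as [|n IH]; cbn [Qpow pow].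
  - exact RMicromega.Q2R_1.
  - now rewrite Q2R_mult, IH.
Qed.

Definition tri (j : nat) : nat := (j * (j + 1) / 2)%nat.

Fixpoint v_sum (n : nat) (q t : R) : R :=
  match n with
  | O => 0
  | S n => v_sum n q t + q ^ tri n * Qpoly_eval (snd (xpow_polys n)) t
  end.

(* Rounding outward to the grid 2^-40 keeps the rationals in the certificate small. *)
Definition grid : positive := 2 ^ 40.
Definition round_down (x : Q) : Q := Qfloor (x * inject_Z (Zpos grid)) # grid.
Definition round_up (x : Q) : Q := - round_down (- x).

Lemma round_down_le x : Q2R (round_down x) <= Q2R x.
Proof.
  apply Qle_Rle. unfold round_down.
  pose proof (Qfloor_le (x * inject_Z (Zpos grid))) as H.
  destruct x as [n d]. unfold Qle in *; cbn [Qnum Qden Qmult inject_Z] in *. lia.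
Qed.

Lemma round_up_ge x : Q2R x <= Q2R (round_up x).
Proof.
  unfold round_up. pose proof (round_down_le (- x)) as H.
  rewrite Q2R_opp in *. lra.
Qed.

Fixpoint v_sum_lo (n : nat) (q0 q1 t0 t1 : Q) : Q :=
  match n with
  | O => 0
  | S n => Qred (v_sum_lo n q0 q1 t0 t1 + round_down
      (Qmul_lo (round_down (Qpow q0 (tri n))) (round_up (Qpow q1 (tri n)))
               (Qpoly_lo (snd (xpow_polys n)) t0 t1)))
  end%Q.

Lemma v_sum_lo_le n q0 q1 t0 t1 q t :
  0 <= Q2R q0 <= q -> q <= Q2R q1 -> 0 <= t -> Q2R t0 <= t <= Q2R t1 ->
  Q2R (v_sum_lo n q0 q1 t0 t1) <= v_sum n q t.
Proof.
  intros Hq0 Hq1 Ht Ht01. induction n as [|n IH]; cbn [v_sum_lo v_sum].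
  - rewrite RMicromega.Q2R_0; lra.
  - rewrite Q2R_Qred, Q2R_plus.
    assert (Hpow :
      Q2R (round_down (Qpow q0 (tri n))) <= q ^ tri n <= Q2R (round_up (Qpow q1 (tri n)))).
    { split; [eapply Rle_trans; [apply round_down_le|] | eapply Rle_trans; [|apply round_up_ge]];
        rewrite Q2R_Qpow; apply pow_incr; lra. }
    assert (Hterm := Qmul_lo_le _ _ _ (q ^ tri n) _ ltac:(apply pow_le; lra) Hpow
                       (Qpoly_lo_le (snd (xpow_polys n)) t0 t1 t Ht Ht01)).
    pose proof (round_down_le (Qmul_lo (round_down (Qpow q0 (tri n)))
                  (round_up (Qpow q1 (tri n))) (Qpoly_lo (snd (xpow_polys n)) t0 t1))).
    lra.
Qed.

Definition Qmid (a b : Q) : Q := Qred ((a + b) * (1#2)).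

Fixpoint bisect_check (cell : Q -> Q -> Q -> Q -> bool) (depth : nat) (q0 q1 t0 t1 : Q) :
    bool :=
  if cell q0 q1 t0 t1 then true else
  match depth with
  | O => false
  | S d => let qm := Qmid q0 q1 in let tm := Qmid t0 t1 in
      if bisect_check cell d q0 qm t0 tm then
      if bisect_check cell d q0 qm tm t1 then
      if bisect_check cell d qm q1 t0 tm then bisect_check cell d qm q1 tm t1
      else false else false else false
  end.

Definition in_box (q0 q1 t0 t1 : Q) (q t : R) : Prop :=
  Q2R q0 <= q <= Q2R q1 /\ Q2R t0 <= t <= Q2R t1.

Lemma interval_split (a b m x : R) : a <= x <= b -> a <= x <= m \/ m <= x <= b.
Proof. intros; destruct (Rle_dec x m); [left | right]; lra. Qed.

Lemma bisect_check_sound (cell : Q -> Q -> Q -> Q -> bool) (P : R -> R -> Prop) :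
  (forall q0 q1 t0 t1 q t, cell q0 q1 t0 t1 = true -> in_box q0 q1 t0 t1 q t -> P q t) ->
  forall depth q0 q1 t0 t1 q t,
  bisect_check cell depth q0 q1 t0 t1 = true -> in_box q0 q1 t0 t1 q t -> P q t.
Proof.
  intros Hcell depth. induction depth as [|d IH]; intros q0 q1 t0 t1 q t Hcheck [Hq Ht];
    cbn [bisect_check] in Hcheck; destruct (cell q0 q1 t0 t1) eqn:Ecell;
    try (now apply (Hcell q0 q1 t0 t1)); try discriminate.
  set (qm := Qmid q0 q1) in Hcheck; set (tm := Qmid t0 t1) in Hcheck.
  destruct (bisect_check cell d q0 qm t0 tm) eqn:E1; [|discriminate].
  destruct (bisect_check cell d q0 qm tm t1) eqn:E2; [|discriminate].
  destruct (bisect_check cell d qm q1 t0 tm) eqn:E3; [|discriminate].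
  destruct (interval_split _ _ (Q2R qm) _ Hq) as [Hq' | Hq'];
  destruct (interval_split _ _ (Q2R tm) _ Ht) as [Ht' | Ht'];
  [ apply (IH _ _ _ _ _ _ E1) | apply (IH _ _ _ _ _ _ E2)
  | apply (IH _ _ _ _ _ _ E3) | apply (IH _ _ _ _ _ _ Hcheck) ]; split; assumption.
Qed.

Definition head_cell (q0 q1 t0 t1 : Q) : bool :=
  Qle_bool 0 q0 && Qle_bool 0 t0 && Qle_bool (1#1000) (v_sum_lo 10 q0 q1 t0 t1).

Lemma head_cell_sound q0 q1 t0 t1 q t :
  head_cell q0 q1 t0 t1 = true -> in_box q0 q1 t0 t1 q t -> 1/1000 <= v_sum 10 q t.
Proof.
  unfold head_cell. rewrite !andb_true_iff, !Qle_bool_iff.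
  intros [[Hq0 Ht0] Hlo] [Hq Ht].
  apply Qle_Rle in Hq0, Ht0, Hlo. rewrite RMicromega.Q2R_0 in Hq0, Ht0.
  replace (1/1000) with (Q2R (1#1000)) by (unfold Q2R; simpl; lra).
  eapply Rle_trans; [exact Hlo|]. apply v_sum_lo_le; lra.
Qed.

Lemma head_certificate : bisect_check head_cell 6 (3#5) (3#4) 0 1 = true.
Proof. vm_compute. reflexivity. Qed.

Lemma v_sum_head_lower q t : 6/10 <= q <= 3/4 -> 0 <= t <= 1 -> 1/1000 <= v_sum 10 q t.
Proof.
  intros Hq Ht. apply (bisect_check_sound head_cell _ head_cell_sound 6 (3#5) (3#4) 0 1);
    [exact head_certificate | split; unfold Q2R; simpl; lra].
Qed.

Lemma tri_S j : tri (S j) = (tri j + S j)%nat.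
Proof.
  unfold tri. replace (S j * (S j + 1))%nat with (j * (j + 1) + S j * 2)%nat by ring.
  now rewrite Nat.div_add.
Qed.

Lemma tri_add_le N k : (tri N + k * S N <= tri (N + k))%nat.
Proof.
  induction k as [|k IH]; [rewrite !Nat.add_0_r; lia|].
  rewrite Nat.add_succ_r, tri_S. lia.
Qed.

Lemma pow_tri_add_le (q : R) N k :
  0 <= q <= 1 -> q ^ tri (N + k) <= q ^ tri N * (q ^ S N) ^ k.
Proof.
  intros Hq. destruct (Nat.le_exists_sub _ _ (tri_add_le N k)) as [d [-> _]].
  rewrite !pow_add, <- pow_mult, Nat.mul_comm.
  assert (q ^ d <= 1) by (rewrite <- (pow1 d); apply pow_incr; lra).
  assert (0 <= q ^ tri N * q ^ (S N * k)) by (apply Rmult_le_pos; apply pow_le; lra).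
  nra.
Qed.

Lemma Im_theta_term q x j : Im (theta_term q x j) = q ^ tri j * Im (pow_n x j).
Proof.
  unfold theta_term. destruct (pow_n x j) as [a b]. cbv [Cmult RtoC Im fst snd tri]. ring.
Qed.

Lemma sum_Im_theta_term q t n :
  sum_f_R0 (fun j => Im (theta_term q ((- t)%R, w) j)) n = w * v_sum (S n) q t.
Proof.
  induction n as [|n IH]; cbn [sum_f_R0 v_sum];
    rewrite ?IH, Im_theta_term, pow_n_xpow_polys; unfold Im; cbn [snd v_sum]; ring.
Qed.

Lemma Cmod_pow_n (x : C) j : Cmod (pow_n x j) = Cmod x ^ j.
Proof.
  induction j as [|j IH]; cbn [pow_n pow].
  - exact Cmod_1.
  - change (Cmod (Cmult x (pow_n x j)) = Cmod x * Cmod x ^ j).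
    now rewrite Cmod_mult, IH.
Qed.

Lemma Im_pow_n_le (x : C) M j : Cmod x <= M -> Rabs (Im (pow_n x j)) <= M ^ j.
Proof.
  intros HM. eapply Rle_trans; [eapply Rle_trans; [apply Rmax_r | apply Rmax_Cmod]|].
  rewrite Cmod_pow_n. apply pow_incr. split; [apply Cmod_ge_0 | exact HM].
Qed.

Lemma theta_term_tail_le (q q1 M : R) (x : C) N k :
  0 <= q <= q1 -> q1 <= 1 -> Cmod x <= M ->
  Rabs (Im (theta_term q x (N + k))) <= q1 ^ tri N * M ^ N * (q1 ^ S N * M) ^ k.
Proof.
  intros Hq Hq1 HM. assert (0 <= M) by (eapply Rle_trans; [apply Cmod_ge_0 | exact HM]).
  rewrite Im_theta_term, Rabs_mult, Rabs_pos_eq by (apply pow_le; lra).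
  assert (Hqpow : q ^ tri (N + k) <= q1 ^ tri N * (q1 ^ S N) ^ k).
  { eapply Rle_trans; [apply pow_incr; exact Hq | apply pow_tri_add_le; lra]. }
  replace (q1 ^ tri N * M ^ N * (q1 ^ S N * M) ^ k)
    with (q1 ^ tri N * (q1 ^ S N) ^ k * M ^ (N + k)) by (rewrite pow_add, Rpow_mult_distr; ring).
  apply Rmult_le_compat; [apply pow_le; lra | apply Rabs_pos | exact Hqpow |].
  now apply Im_pow_n_le.
Qed.

Lemma Series_tail_geom_le (a : nat -> R) N c r :
  (0 < N)%nat -> 0 <= r < 1 -> (forall k, Rabs (a (N + k)%nat) <= c * r ^ k) ->
  ex_series a /\ Rabs (Series a - sum_f_R0 a (pred N)) <= c / (1 - r).
Proof.
  intros HN Hr Htail. set (g := fun k => a (N + k)%nat).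
  assert (Hgeom : ex_series (fun k => c * r ^ k)).
  { apply (ex_series_scal_l c (fun k => r ^ k)), ex_series_geom. rewrite Rabs_pos_eq; lra. }
  assert (Habs : ex_series (fun k => Rabs (g k))).
  { apply (ex_series_le (fun k => Rabs (g k)) (fun k => c * r ^ k)); [intro k | exact Hgeom].
    change (norm (Rabs (g k))) with (Rabs (Rabs (g k))). rewrite Rabs_Rabsolu. apply Htail. }
  assert (Ha : ex_series a) by (apply (ex_series_incr_n a N), ex_series_Rabs, Habs).
  split; [exact Ha|].
  rewrite (Series_incr_n a N HN Ha). fold g.
  replace (sum_f_R0 a (pred N) + Series g - sum_f_R0 a (pred N)) with (Series g) by ring.
  eapply Rle_trans; [apply Series_Rabs, Habs|].
  eapply Rle_trans.
  { apply Series_le; [intro k; split; [apply Rabs_pos | apply Htail] | exact Hgeom]. }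
  rewrite Series_scal_l, Series_geom by (rewrite Rabs_pos_eq; lra). apply Rle_refl.
Qed.

Lemma Cmod_x_le t : 0 <= t <= 1 -> Cmod (((- t)%R, w) : C) <= 12/5.
Proof.
  intros Ht. unfold Cmod; cbn [fst snd pow]. rewrite !Rmult_1_r, w_sqr.
  replace (12/5) with (sqrt ((12/5) ^ 2)) by (rewrite sqrt_pow2; lra).
  apply sqrt_le_1_alt. nra.
Qed.

Lemma w_gt_1 : 1 < w.
Proof.
  assert (0 < w) by (apply Rdiv_lt_0_compat; [lra | apply sqrt_lt_R0; lra]).
  pose proof w_sqr. nra.
Qed.

Lemma Im_theta_pos q t :
  6/10 <= q <= 3/4 -> 0 <= t <= 1 ->
  0 < Series (fun j => Im (theta_term q ((- t)%R, w) j)).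
Proof.
  intros Hq Ht.
  set (c := (3/4) ^ tri 10 * (12/5) ^ 10). set (r := (3/4) ^ 11 * (12/5)).
  assert (Hr : 0 <= r < 1) by (unfold r; simpl; lra).
  assert (Hc : c / (1 - r) < 1/1000).
  { apply Rlt_div_l; [lra|]. unfold c, r, tri; simpl; lra. }
  destruct (Series_tail_geom_le (fun j => Im (theta_term q ((- t)%R, w) j)) 10 c r
              ltac:(lia) Hr) as [_ Htail].
  { intro k. apply theta_term_tail_le; [lra | lra | now apply Cmod_x_le]. }
  change (pred 10) with 9%nat in Htail. rewrite sum_Im_theta_term in Htail.
  apply Rabs_le_between in Htail.
  assert (Hhead := v_sum_head_lower q t Hq Ht).
  assert (v_sum 10 q t <= w * v_sum 10 q t) by (assert (H := w_gt_1); nra).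
  lra.
Qed.

Theorem lemma10 (q t : R) :
  6/10 <= q <= 3/4 -> 0 <= t <= 1 ->
  theta q ((- t)%R, w) <> (0%R, 0%R).
Proof.
  intros Hq Ht Heq. apply (f_equal snd) in Heq. unfold theta in Heq; cbn [snd] in Heq.
  pose proof (Im_theta_pos q t Hq Ht). lra.
Qed.
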